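(* Assume (a) and (b). Then the minimizer of the optimization problem $$\min_{\beta\in\mathbb{R}}\;\lambda\int f^{*}\!\Big(-\frac{\beta+L_z(\theta)}{\lambda}\Big)\,dQ(\theta)+\beta$$ is $N_{Q,z}(\lambda)$.
   Context: Setting. - $\mathcal{M}\subseteq\mathbb{R}^d$; $h:\mathcal{M}\times\mathcal{X}\to\mathcal{Y}$; the loss $\ell:\mathcal{Y}\times\mathcal{Y}\to[0,\infty)$ satisfies $\ell(y,y)=0$. - For a dataset $z=((x_1,y_1),\dots,(x_n,y_n))$, $L_z(\theta)=\frac1n\sum_i\ell(h(\theta,x_i),y_i)$. - $Q$ is a Borel probability measure on $\mathcal{M}$, and $\lambda>0$. - $f:[0,\infty)\to\mathbb{R}$ is convex with $f(1)=0$ and $f(0)=\lim_{x\to0^+}f(x)$. - $\dot f$ is the derivative of $f$ on $(0,\infty)$ and $\dot f^{-1}$ its inverse function. Legendre–Fenchel transform. $f^*(t)=\sup_{x}(tx-f(x))$ (supremum over the domain of $f$), defined on $\mathcal{J}=\{t\in\mathbb{R}:f^*(t)<\infty\}$. Assumptions. - (a) $f$ is strictly convex and differentiable. - (b) There exists $\beta\in\mathbb{R}$ such that $\dot f^{-1}\big(-\frac{\beta+L_z(\theta)}{\lambda}\big)>0$ for all $\theta\in\operatorname{supp}Q$ and $\int\dot f^{-1}\big(-\frac{\beta+L_z(\theta)}{\lambda}\big)dQ(\theta)=1$. Normalization function. Let $\mathcal{A}_{Q,z}\subseteq(0,\infty)$ be the set of $\lambda$ for which (b) holds. The normalization function $N_{Q,z}:\mathcal{A}_{Q,z}\to\mathbb{R}$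 is defined by $$\int\dot f^{-1}\Big(-\frac{N_{Q,z}(\lambda)+L_z(\theta)}{\lambda}\Big)dQ(\theta)=1.$$ That is, $N_{Q,z}(\lambda)$ is the value $\beta$ of assumption (b). *)

From mathcomp Require Import all_boot all_order all_algebra.
From mathcomp Require Import all_classical all_reals all_analysis.
Set Implicit Arguments. Unset Strict Implicit. Unset Printing Implicit Defensive.
Import Order.TTheory GRing.Theory Num.Theory.
Import numFieldNormedType.Exports.
Local Open Scope classical_set_scope.
Local Open Scope ring_scope.

Definition Rvec (R : realType) (d : nat) : normedModType R := 'M[R]_(1, d).

Definition BorelRd (R : realType) (d : nat) := g_sigma_algebraType (@open (Rvec R d)).

Definition msupp (R : realType) (d : nat) (Q : set (BorelRd R d) -> \bar R)
  : set (BorelRd R d) :=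
  [set th | forall U : set (Rvec R d), open U -> U th -> (0 < Q U)%E].

Definition Lz (R : realType) (T X Y : Type) (ell : Y -> Y -> R)
  (h : T -> X -> Y) (z : seq (X * Y)) (th : T) : R :=
  (size z)%:R^-1 * \sum_(p <- z) ell (h th p.1) p.2.

(* Legendre-Fenchel transform of f : [0,oo) -> R, extended-real valued
   (f^*(t) = +oo exactly when t is outside the domain J). *)
Definition fstar (R : realType) (f : R -> R) (t : R) : \bar R :=
  ereal_sup [set (t * x - f x)%:E | x in `[0, +oo[%classic].

(* Inverse of the derivative of f on (0,oo): the x > 0 with f'(x) = t
   (unique under strict convexity); default value 0 outside the range of f'. *)
Definition fdot_inv (R : realType) (f : R -> R) (t : R) : R :=
  xget 0 [set x | 0 < x /\ derive1 f x = t].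

Definition convex_on (R : realType) (f : R -> R) (D : set R) : Prop :=
  forall x y t, D x -> D y -> 0 <= t <= 1 ->
    f (t * x + (1 - t) * y) <= t * f x + (1 - t) * f y.

Definition strictly_convex_on (R : realType) (f : R -> R) (D : set R) : Prop :=
  forall x y t, D x -> D y -> x != y -> 0 < t < 1 ->
    f (t * x + (1 - t) * y) < t * f x + (1 - t) * f y.

Definition assumption_b (R : realType) (d : nat) (Q : set (BorelRd R d) -> \bar R)
  (M : set (BorelRd R d)) (L : BorelRd R d -> R) (f : R -> R) (lam beta : R)
  : Prop :=
  (forall th, M th -> msupp Q th -> 0 < fdot_inv f (- ((beta + L th) / lam)))
  /\ (\int[Q]_(th in M) (fdot_inv f (- ((beta + L th) / lam)))%:E = 1)%E.

Definition normalization (R : realType) (d : nat) (Q : set (BorelRd R d) -> \bar R)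
  (M : set (BorelRd R d)) (L : BorelRd R d -> R) (f : R -> R) (lam : R) : R :=
  xget 0 [set beta | assumption_b Q M L f lam beta].

Definition objective (R : realType) (d : nat) (Q : set (BorelRd R d) -> \bar R)
  (M : set (BorelRd R d)) (L : BorelRd R d -> R) (f : R -> R) (lam beta : R)
  : \bar R :=
  (lam%:E * \int[Q]_(th in M) fstar f (- ((beta + L th) / lam)) + beta%:E)%E.

From mathcomp Require Import all_boot all_order all_algebra.
From mathcomp Require Import all_classical all_reals all_analysis.
From mathcomp Require Import measurable_realfun.
From mathcomp Require Import ring lra.
Set Implicit Arguments. Unset Strict Implicit. Unset Printing Implicit Defensive.
Import Order.TTheory GRing.Theory Num.Theory.
Import numFieldNormedType.Exports.
Local Open Scope classical_set_scope.
Local Open Scope ring_scope.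

(* Put s := -(N + L)/lambda and x := (f')^-1 o s, so that x > 0 and f'(x) = s on
   supp Q, and int x dQ = 1.  Fenchel-Young gives f^*(f'(x)) = f'(x) x - f(x), while
   f^*(t) >= t x - f(x) for all t, strictly unless f'(x) = t (strict convexity).
   Since -(beta + L)/lambda = s + c with c := (N - beta)/lambda, this yields
   f^*(s + c) >= f^*(s) + c x pointwise on supp Q, and integrating,
   lambda int f^*(s + c) dQ + beta >= lambda int f^*(s) dQ + N, the gap being the
   integral of a function positive on the support, which has full measure; so
   equality forces c = 0.  Measurability of (f')^-1 comes from Darboux's theorem. *)

Section derivative.
Variable R : realType.
Implicit Types (f : R -> R) (x c e r t : R).

Lemma derive1_approx f x e : derivable f x 1 -> 0 < e ->
  exists2 r, 0 < r & forall h, h != 0 -> `|h| < r ->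
    `|f (x + h) - f x - derive1 f x * h| <= e * `|h|.
Proof.
move=> fx e0; have /cvgrPdist_le /(_ e e0) := fx.
rewrite derive1E => /nbhs_ballP [r /= r0 quotient_close]; exists r => // h h0 hr.
have := quotient_close h; rewrite /ball /= sub0r normrN => /(_ hr h0) /=.
rewrite /derive /=; set D := lim _ => Dh.
have -> : f (x + h) - f x - D * h = - (h * (D - h^-1 *: (f (h *: 1 + x) - f x))).
  rewrite -[h *: 1]/(h * 1) mulr1 -[h^-1 *: _]/(h^-1 * _).
  by rewrite [h + x]addrC; field.
by rewrite normrN normrM mulrC ler_wpM2r.
Qed.

Lemma derive1_approx_step f x e r : derivable f x 1 -> 0 < e -> 0 < r ->
  exists2 h, 0 < h < r & forall k, `|k| = h ->
    `|f (x + k) - f x - derive1 f x * k| <= e * h.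
Proof.
move=> fx e0 r0; have [r1 r10 approx] := derive1_approx fx e0.
pose h := Num.min r r1 / 2.
have m0 : 0 < Num.min r r1 by rewrite lt_min r0 r10.
have h0 : 0 < h by rewrite divr_gt0.
have : h < Num.min r r1 by rewrite /h ltr_pdivrMr // ltr_pMr // ltr1n.
rewrite lt_min => /andP[hr hr1]; exists h; first by rewrite h0.
move=> k kh; rewrite -kh; apply: approx; last by rewrite kh.
by rewrite -normr_eq0 kh gt_eqF.
Qed.

Lemma slope_right_lt f x c r : derivable f x 1 -> derive1 f x < c -> 0 < r ->
  exists2 h, 0 < h < r & f (x + h) - f x < c * h.
Proof.
move=> fx Dc r0; have e0 : 0 < (c - derive1 f x) / 2 by rewrite divr_gt0 ?subr_gt0.
have [h /andP[h0 hr] step] := derive1_approx_step fx e0 r0.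
exists h; first by rewrite h0.
have := step h (gtr0_norm h0); rewrite ler_norml => /andP[_]; nra.
Qed.

Lemma slope_left_lt f x c r : derivable f x 1 -> c < derive1 f x -> 0 < r ->
  exists2 h, 0 < h < r & f (x - h) - f x < - c * h.
Proof.
move=> fx Dc r0; have e0 : 0 < (derive1 f x - c) / 2 by rewrite divr_gt0 ?subr_gt0.
have [h /andP[h0 hr] step] := derive1_approx_step fx e0 r0.
exists h; first by rewrite h0.
have := step (- h); rewrite normrN gtr0_norm // => /(_ erefl).
rewrite ler_norml => /andP[_]; nra.
Qed.

Lemma derive1_darboux f x1 x2 t : x1 <= x2 ->
  (forall x, x1 <= x <= x2 -> derivable f x 1) ->
  derive1 f x1 <= t <= derive1 f x2 -> exists2 x, x1 <= x <= x2 & derive1 f x = t.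
Proof.
move=> x12 fd /andP[t1 t2].
have [<-|n1] := eqVneq (derive1 f x1) t; first by exists x1; rewrite ?lexx ?x12.
have [<-|n2] := eqVneq (derive1 f x2) t; first by exists x2; rewrite ?lexx ?x12.
have lt1 : derive1 f x1 < t by rewrite lt_neqAle n1.
have lt2 : t < derive1 f x2 by rewrite lt_neqAle eq_sym n2.
set g := f - (fun y => y * t).
have cg : {within `[x1, x2], continuous g}.
  apply: continuous_in_subspaceT => y; rewrite inE /= in_itv /= => y12.
  apply: cvgB; last exact: cvgMr_tmp.
  exact/differentiable_continuous/derivable1_diffP/fd.
have [c] := EVT_min x12 cg; rewrite in_itv /= => c12 cmin.
have /andP[c1 c2] := c12.
have gc y : x1 <= y <= x2 -> f c - c * t <= f y - y * t.
  by move=> y12; apply: cmin; rewrite in_itv.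
case: (ltgtP (derive1 f c) t) => [Dlt|Dgt|]; last by exists c.
- have cx2 : 0 < x2 - c.
    rewrite subr_gt0 lt_neqAle c2 andbT.
    by apply: contraTneq Dlt => ->; rewrite -leNgt ltW.
  have [h /andP[h0 hr] slope] := slope_right_lt (fd c c12) Dlt cx2.
  have := gc (c + h); rewrite (_ : _ <= _ <= _); first by move=> /(_ isT); lra.
  by apply/andP; split; lra.
- have x1c : 0 < c - x1.
    rewrite subr_gt0 lt_neqAle c1 andbT.
    by apply: contraTneq Dgt => <-; rewrite -leNgt ltW.
  have [h /andP[h0 hr] slope] := slope_left_lt (fd c c12) Dgt x1c.
  have := gc (c - h); rewrite (_ : _ <= _ <= _); first by move=> /(_ isT); lra.
  by apply/andP; split; lra.
Qed.

End derivative.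

Section convex_derivative.
Variables (R : realType) (f : R -> R).
Hypothesis f_convex : convex_on f `[0, +oo[.
Hypothesis f_strict : strictly_convex_on f `[0, +oo[.
Hypothesis f_der : forall x, 0 < x -> derivable f x 1.
Implicit Types (x y t : R).

Lemma convex_tangent x y : 0 < x -> 0 <= y ->
  f x + derive1 f x * (y - x) <= f y.
Proof.
move=> x0 y0; set v := y - x.
have [v0|v_neq0] := eqVneq v 0.
  by rewrite v0 mulr0 addr0; move/eqP: v0; rewrite subr_eq0 => /eqP ->.
have v_gt0 : 0 < `|v| by rewrite normr_gt0.
apply/ler_addgt0Pr => e e0.
have [r r0 approx] := derive1_approx (f_der x0) (divr_gt0 e0 v_gt0).
pose t := r / (2 * (`|v| + r)).
have t0 : 0 < t by rewrite divr_gt0 // mulr_gt0 // ltr_wpDl.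
have t1 : t < 1 by rewrite ltr_pdivrMr ?mulr_gt0 ?ltr_wpDl // mul1r; lra.
have tv : `|t * v| < r.
  by rewrite normrM gtr0_norm // /t mulrAC ltr_pdivrMr ?mulr_gt0 ?ltr_wpDl //; nra.
have chord : f (x + t * v) <= t * f y + (1 - t) * f x.
  rewrite (_ : x + t * v = t * y + (1 - t) * x); last by rewrite /v; ring.
  apply: f_convex; rewrite /= ?in_itv /= ?andbT //; first exact: ltW.
  by rewrite !ltW.
have := approx (t * v) (mulf_neq0 (lt0r_neq0 t0) v_neq0) tv.
rewrite ler_norml normrM (gtr0_norm t0) => /andP[lb _].
have key : t * (f x + derive1 f x * v) <= t * (f y + e).
  by move: lb; rewrite (_ : e / `|v| * (t * `|v|) = t * e); [lra | field; rewrite gt_eqF].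
by rewrite ler_pM2l in key.
Qed.

Lemma derive1_lt x y : 0 < x -> x < y -> derive1 f x < derive1 f y.
Proof.
move=> x0 xy; have y0 : 0 < y := lt_trans x0 xy.
have Tx := convex_tangent x0 (ltW y0); have Ty := convex_tangent y0 (ltW x0).
rewrite lt_neqAle; apply/andP; split; last by nra.
apply/negP => /eqP Dxy; rewrite -Dxy in Ty.
have m0 : 0 <= (x + y) / 2 by rewrite divr_ge0 // addr_ge0 // ltW.
have Tm := convex_tangent x0 m0.
have : f (1/2 * x + (1 - 1/2) * y) < 1/2 * f x + (1 - 1/2) * f y.
  by apply: f_strict; rewrite /= ?in_itv /= ?andbT ?ltW ?lt_eqF //; lra.
rewrite (_ : 1/2 * x + (1 - 1/2) * y = (x + y) / 2); last by field.
lra.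
Qed.

Lemma fdot_inv_ge0 t : 0 <= fdot_inv f t.
Proof. by rewrite /fdot_inv; case: xgetP => [y _ [/ltW]|]. Qed.

Lemma derive1_fdot_inv t : 0 < fdot_inv f t -> derive1 f (fdot_inv f t) = t.
Proof. by rewrite /fdot_inv; case: xgetP => [y _ []|_]; rewrite ?ltxx. Qed.

Lemma fdot_inv_gt0 x : 0 < x -> 0 < fdot_inv f (derive1 f x).
Proof. by move=> x0; rewrite /fdot_inv; case: xgetP => [y _ []//|/(_ x)[]]. Qed.

(* The superlevel sets of (f')^-1 are intervals: f' is increasing and, by Darboux,
   its range is an interval. *)
Lemma measurable_fdot_inv : measurable_fun setT (fdot_inv f).
Proof.
apply: (measurability (@RGenCInfty.G R)) => [|/= _ [_] [c] -> <-].
  exact: RGenCInfty.measurableE.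
apply: measurableI => //; apply: is_interval_measurable.
have [c0|c0] := leP c 0.
  by move=> t1 t2 _ _ t _ /=; rewrite in_itv /= andbT (le_trans c0) ?fdot_inv_ge0.
move=> t1 t2 /=; rewrite !in_itv /= !andbT => ct1 ct2 t /andP[tt1 tt2].
set x1 := fdot_inv f t1 in ct1 *; set x2 := fdot_inv f t2 in ct2 *.
have x10 : 0 < x1 := lt_le_trans c0 ct1.
have x20 : 0 < x2 := lt_le_trans c0 ct2.
have D1 := derive1_fdot_inv x10; have D2 := derive1_fdot_inv x20.
have x12 : x1 <= x2.
  by rewrite leNgt; apply/negP => /(derive1_lt x20); rewrite D1 D2; lra.
have [x /andP[x1x _] Dx] : exists2 x, x1 <= x <= x2 & derive1 f x = t.
  apply: derive1_darboux => //; last by rewrite D1 D2 tt1.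
  by move=> y /andP[+ _] => /(lt_le_trans x10)/f_der.
have x0 : 0 < x := lt_le_trans x10 x1x.
have p0 := fdot_inv_gt0 x0.
rewrite -Dx in_itv /= andbT (le_trans ct1) // leNgt; apply/negP => /(derive1_lt p0).
by rewrite derive1_fdot_inv // D1 Dx; lra.
Qed.

End convex_derivative.

Section fenchel.
Variables (R : realType) (f : R -> R).
Implicit Types (x t c : R).

Lemma fstar_ge t x : 0 <= x -> ((t * x - f x)%:E <= fstar f t)%E.
Proof. by move=> x0; apply: ereal_sup_ubound; exists x; rewrite //= in_itv /= x0. Qed.

Lemma fstar_lsc : lower_semicontinuous (fstar f).
Proof.
move=> t a /ereal_sup_gt [_ [x /= x0 <-]]; rewrite lte_fin => ax.
exists [set s | a < s * x - f x].
  apply: (cvgr_gt _ (_ : (fun s => s * x - f x) @ t --> t * x - f x)) => //.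
  by apply: cvgB; [exact: cvgMr_tmp | exact: cvg_cst].
move: x0; rewrite in_itv /= andbT => x0 s /= as_.
by apply: lt_le_trans (fstar_ge s x0); rewrite lte_fin.
Qed.

Lemma measurable_fstar : measurable_fun setT (fstar f).
Proof. exact: lower_semicontinuous_measurable fstar_lsc. Qed.

Lemma fstar_ge_oppf0 t : ((- f 0)%:E <= fstar f t)%E.
Proof. by have := fstar_ge t (lexx 0); rewrite mulr0 sub0r. Qed.

Hypothesis f_convex : convex_on f `[0, +oo[.
Hypothesis f_der : forall x, 0 < x -> derivable f x 1.

Lemma fstar_derive1 x : 0 < x ->
  fstar f (derive1 f x) = (derive1 f x * x - f x)%:E.
Proof.
move=> x0; apply/eqP; rewrite eq_le (fstar_ge _ (ltW x0)) andbT.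
apply: ge_ereal_sup => _ [y /= y0 <-]; rewrite lee_fin.
move: y0; rewrite in_itv /= andbT => /(convex_tangent f_convex f_der x0); lra.
Qed.

Lemma fstar_gt t x : 0 < x -> derive1 f x != t ->
  ((t * x - f x)%:E < fstar f t)%E.
Proof.
move=> x0; case: (ltgtP (derive1 f x) t) => // [Dlt|Dgt] _.
  have [h /andP[h0 _] slope] := slope_right_lt (f_der x0) Dlt ltr01.
  apply: lt_le_trans (fstar_ge t (ltW (addr_gt0 x0 h0))).
  by rewrite lte_fin mulrDr; lra.
have [h /andP[h0 hx] slope] := slope_left_lt (f_der x0) Dgt x0.
apply: lt_le_trans (fstar_ge t (_ : 0 <= x - h)); last by rewrite subr_ge0 ltW.
by rewrite lte_fin mulrBr; lra.
Qed.

Lemma fstar_derive1_shift x c : 0 < x ->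
  (fstar f (derive1 f x) + (c * x)%:E <= fstar f (derive1 f x + c))%E.
Proof.
move=> x0; rewrite fstar_derive1 // -EFinD.
by apply: le_trans (fstar_ge _ (ltW x0)); rewrite lee_fin; lra.
Qed.

Lemma fstar_derive1_shift_lt x c : 0 < x -> c != 0 ->
  (fstar f (derive1 f x) + (c * x)%:E < fstar f (derive1 f x + c))%E.
Proof.
move=> x0 c0; rewrite fstar_derive1 // -EFinD.
apply: le_lt_trans (fstar_gt x0 _); first by rewrite lee_fin; lra.
by rewrite -subr_eq0 opprD addNKr oppr_eq0.
Qed.

End fenchel.

Section support.
Variables (R : realType) (d : nat).

Lemma rat_approx (x : Rvec R d) (e : R) : 0 < e ->
  exists q : 'M[rat]_(1, d), ball x e (map_mx ratr q : Rvec R d).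
Proof.
move=> e0; have itv i j : x i j - e < x i j + e by lra.
exists (\matrix_(i, j) projT1 (cid (rat_in_itvoo (itv i j)))); split => // i j.
rewrite !mxE; case: cid => /= q; rewrite in_itv /= => /andP[q1 q2].
by rewrite /ball /= ltr_norml; apply/andP; split; lra.
Qed.

Lemma rat_ball_sub (U : set (Rvec R d)) x : open U -> U x ->
  exists (q : 'M[rat]_(1, d)) (n : nat),
    let B := ball (map_mx ratr q : Rvec R d) n.+1%:R^-1 in B x /\ B `<=` U.
Proof.
move=> oU Ux; have /nbhs_ballP [r /= r0 rU] : nbhs x U by apply: open_nbhs_nbhs.
set n := Num.truncn (r / 2)^-1.
have r20 : 0 < r / 2 by rewrite divr_gt0.
have n_lt : n.+1%:R^-1 < r / 2.
  by rewrite -[X in _ < X]invrK ltf_pV2 ?posrE ?invr_gt0 ?ltr0n // truncnS_gt.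
have [q xq] : exists q : 'M[rat]_(1, d), ball x n.+1%:R^-1 (map_mx ratr q : Rvec R d).
  by apply: rat_approx; rewrite invr_gt0 ltr0n.
exists q, n; split; first exact: ball_sym.
move=> y qy; apply: rU; apply: le_ball (ball_triangle xq qy).
by move: n_lt; set m := n.+1%:R^-1; lra.
Qed.

Lemma msuppC_negligible (Q : {measure set (BorelRd R d) -> \bar R}) :
  Q.-negligible (~` msupp Q).
Proof.
pose B (p : 'M[rat]_(1, d) * nat) : set (BorelRd R d) :=
  ball (map_mx ratr p.1 : Rvec R d) p.2.+1%:R^-1.
have mB p : measurable (B p) by apply: sub_sigma_algebra; exact: ball_open.
pose F k : set (BorelRd R d) := if unpickle k is Some p then
  if pselect (Q (B p) = 0%E) then B p else set0 else set0.
apply: (negligibleS (_ : _ `<=` \bigcup_k F k)).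
  move=> x /existsNP [U /not_implyP [oU /not_implyP [Ux /negP]]].
  rewrite -leNgt measure_le0 => /eqP QU0.
  have [q [n [Bx BU]]] := rat_ball_sub oU Ux.
  exists (pickle (q, n)) => //; rewrite /F pickleK.
  case: pselect => // - [].
  by apply: (subset_measure0 (mB (q, n)) (sub_sigma_algebra oU) _ QU0).
apply: negligible_bigcup => k; rewrite /F.
case: (unpickle k) => [p|]; last exact: negligible_set0.
case: pselect => [QB|nQB]; last exact: negligible_set0.
by exists (B p); split; [exact: mB|exact: QB|].
Qed.

Lemma open_msuppC (Q : set (BorelRd R d) -> \bar R) :
  open (~` msupp Q : set (Rvec R d)).
Proof.
rewrite openE => x /existsNP [U /not_implyP [oU /not_implyP [Ux QU]]].
apply: (@filterS _ _ _ U); last exact: open_nbhs_nbhs.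
by move=> y Uy /(_ U oU Uy).
Qed.

Lemma measurable_msupp (Q : set (BorelRd R d) -> \bar R) : measurable (msupp Q).
Proof.
by rewrite -[msupp Q]setCK; apply: measurableC; apply: sub_sigma_algebra; exact: open_msuppC.
Qed.

Lemma msuppC_null (Q : {measure set (BorelRd R d) -> \bar R}) :
  Q (~` msupp Q) = 0%E.
Proof.
have [N [mN N0 suppN]] := msuppC_negligible Q.
exact: (subset_measure0 (measurableC (measurable_msupp Q)) mN suppN N0).
Qed.

End support.

Section integral.
Local Open Scope ereal_scope.
Context d (T : measurableType d) (R : realType).
Implicit Types (D N : set T) (g : T -> \bar R).

Lemma integral_setD_null (mu : {measure set T -> \bar R}) D N g :
  measurable N -> measurable D -> measurable_fun D g -> mu N = 0 ->
  \int[mu]_(x in D) g x = \int[mu]_(x in D `\` N) g x.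
Proof.
move=> mN mD mg N0; rewrite integralE [RHS]integralE.
by congr (_ - _); apply: ge0_negligible_integral => //;
  [exact: measurable_funepos | exact: measurable_funeneg].
Qed.

Lemma not_integrable_lbounded_integral (mu : {finite_measure set T -> \bar R})
    D g (a : R) :
  measurable D -> measurable_fun D g -> (forall x, D x -> a%:E <= g x) ->
  ~ mu.-integrable D g -> \int[mu]_(x in D) g x = +oo.
Proof.
move=> mD mg ga nint.
have neg_lty : \int[mu]_(x in D) g^\- x < +oo.
  apply: le_lt_trans (_ : _ <= \int[mu]_(x in D) (cst `|a|%:E) x) _.
    apply: ge0_le_integral => //; first exact: measurable_funeneg.
    move=> x Dx; rewrite funenegE /= ge_max lee_fin normr_ge0 andbT.
    rewrite leeNl; apply: le_trans (ga _ Dx).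
    by rewrite -EFinN lee_fin; apply: lerNnormlW.
  exact/integrable_lty/finite_measure_integrable_cst.
have pos_eqy : \int[mu]_(x in D) g^\+ x = +oo.
  apply/eqP; rewrite -leye_eq leNgt; apply/negP => pos_lty.
  apply: nint; apply/integrableP; split => //.
  rewrite (eq_integral (fun x => g^\+ x + g^\- x)); last first.
    by move=> x _; rewrite -[LHS]/((abse \o g) x) fune_abse.
  rewrite ge0_integralD //; [|exact: measurable_funepos|exact: measurable_funeneg].
  by rewrite lte_add_pinfty // ltNye.
by rewrite integralE pos_eqy addye // eqe_oppLR /= lt_eqF.
Qed.

Lemma gt0_integral_eq0 (mu : {measure set T -> \bar R}) D g :
  measurable D -> measurable_fun D g -> (forall x, D x -> 0 < g x) ->
  \int[mu]_(x in D) g x = 0 -> mu D = 0.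
Proof.
move=> mD mg g_gt0 g0.
have : \int[mu]_(x in D) `|g x| = 0.
  by rewrite -g0; apply: eq_integral => x /[!inE] Dx; rewrite gee0_abs ?ltW ?g_gt0.
move=> /(ae_eq_integral_abs mu mD mg) [N [mN N0 gN]].
apply: (subset_measure0 mD mN _ N0) => x Dx; apply: gN => /(_ Dx) gx0.
by have := g_gt0 x Dx; rewrite gx0 ltxx.
Qed.

End integral.

Lemma EFin_le_affine (R : realType) (lam a b : R) (J : \bar R) : 0 < lam ->
  (a%:E <= lam%:E * J + b%:E)%E = (((a - b) / lam)%:E <= J)%E.
Proof.
move=> lam0; case: J => [J| |] /=.
- by rewrite -EFinM -EFinD !lee_fin ler_pdivrMr // lerBlDr mulrC.
- by rewrite gt0_muley ?lte_fin // addye // !leey.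
- by rewrite gt0_muleNy ?lte_fin // addNye // !leeNy_eq.
Qed.

Lemma affine_le_EFin (R : realType) (lam a b : R) (J : \bar R) : 0 < lam ->
  (lam%:E * J + b%:E <= a%:E)%E = (J <= ((a - b) / lam)%:E)%E.
Proof.
move=> lam0; case: J => [J| |] /=.
- by rewrite -EFinM -EFinD !lee_fin ler_pdivlMr // lerBrDr mulrC.
- by rewrite gt0_muley ?lte_fin // addye // !leye_eq.
- by rewrite gt0_muleNy ?lte_fin // addNye // !leNye.
Qed.

Section fstar_integral.
Context dT (T : measurableType dT) (R : realType).
Variables (mu : {finite_measure set T -> \bar R}) (f : R -> R).
Hypothesis f_convex : convex_on f `[0, +oo[.
Hypothesis f_der : forall x, 0 < x -> derivable f x 1.
Variables (D : set T) (x s : T -> R).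
Hypothesis mD : measurable D.
Hypothesis ms : measurable_fun D s.
Hypothesis mx : measurable_fun D x.
Hypothesis x_gt0 : forall t, D t -> 0 < x t.
Hypothesis derive1_x : forall t, D t -> derive1 f (x t) = s t.
Hypothesis integral_x : (\int[mu]_(t in D) (x t)%:E = 1)%E.

Local Open Scope ereal_scope.

Let integrable_x : mu.-integrable D (fun t => (x t)%:E).
Proof.
apply/integrableP; split; first exact/measurable_EFinP.
rewrite (eq_integral (fun t => (x t)%:E)) ?integral_x ?ltry // => t /[!inE] Dt.
by rewrite gee0_abs // lee_fin ltW ?x_gt0.
Qed.

Let measurable_fstar_shift c : measurable_fun D (fun t => fstar f (s t + c)).
Proof. exact/(measurableT_comp (measurable_fstar f))/measurable_funD. Qed.

Let fstar_s t : D t -> fstar f (s t) = (s t * x t - f (x t))%:E.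
Proof. by move=> Dt; rewrite -derive1_x // fstar_derive1 ?x_gt0. Qed.

(* -f(0) <= f^*(s) = s x - f(x) <= (K - f'(1)) x + f'(1) - f(1), by the tangent at 1. *)
Lemma integrable_fstar (K : R) : (forall t, D t -> s t <= K)%R ->
  mu.-integrable D (fun t => fstar f (s t)).
Proof.
move=> sK; set D1 := derive1 f 1.
pose c1 := (`|f 0| + `|D1 - f 1|)%R; pose c2 := `|K - D1|%R.
have c1_ge0 : (0 <= c1)%R by rewrite addr_ge0.
have c2_ge0 : (0 <= c2)%R := normr_ge0 _.
apply: (le_integrable mD (_ : measurable_fun D _) (_ : forall t, D t ->
  `|fstar f (s t)| <= `|(c1 + c2 * x t)%:E|)).
- by have := measurable_fstar_shift 0; under eq_fun do rewrite addr0.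
- move=> t Dt; have x0 := x_gt0 Dt.
  rewrite fstar_s //= lee_fin (@ger0_norm _ (c1 + c2 * x t)%R); last first.
    by rewrite addr_ge0 // mulr_ge0 // ltW.
  have lb := fstar_ge_oppf0 f (s t); rewrite fstar_s // lee_fin in lb.
  have tan1 := convex_tangent f_convex f_der ltr01 (ltW x0); rewrite -/D1 in tan1.
  have sx : (s t * x t <= K * x t)%R by apply: ler_wpM2r; [exact: ltW | exact: sK].
  have Kx : ((K - D1) * x t <= c2 * x t)%R by apply: ler_wpM2r; [exact: ltW | exact: ler_norm].
  have := mulr_ge0 c2_ge0 (ltW x0); have := ler_norm (D1 - f 1)%R; have := ler_norm (f 0).
  have := normr_ge0 (D1 - f 1)%R; have := normr_ge0 (f 0).
  by move=> *; rewrite ler_norml /c1; apply/andP; split; lra.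
- under eq_fun do rewrite EFinD EFinM.
  apply: integrableD => //; first exact: finite_measure_integrable_cst.
  exact: integrableZl.
Qed.

Hypothesis integrable_fstar_s : mu.-integrable D (fun t => fstar f (s t)).

Let G c t := fstar f (s t) + (c * x t)%:E.

Let integrable_G c : mu.-integrable D (G c).
Proof. by apply: integrableD => //; under eq_fun do rewrite EFinM; exact: integrableZl. Qed.

Let integral_G c :
  \int[mu]_(t in D) G c t = \int[mu]_(t in D) fstar f (s t) + c%:E.
Proof.
rewrite integralD //; last by under eq_fun do rewrite EFinM; exact: integrableZl.
congr (_ + _); under eq_integral do rewrite EFinM.
by rewrite integralZl // integral_x mule1.
Qed.

Let integral_fstar_shift_not_integrable c :
  ~ mu.-integrable D (fun t => fstar f (s t + c)) ->
  \int[mu]_(t in D) fstar f (s t + c) = +oo.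
Proof.
apply: not_integrable_lbounded_integral => // t _; exact: fstar_ge_oppf0.
Qed.

Lemma integral_fstar_shift_ge c :
  \int[mu]_(t in D) fstar f (s t) + c%:E <= \int[mu]_(t in D) fstar f (s t + c).
Proof.
have [ic|nic] := pselect (mu.-integrable D (fun t => fstar f (s t + c))).
  rewrite -integral_G; apply: le_integral => // t /[!inE] Dt.
  by rewrite /G -derive1_x //; apply: fstar_derive1_shift; rewrite ?x_gt0.
by rewrite integral_fstar_shift_not_integrable // leey.
Qed.

Lemma integral_fstar_shift_le_eq0 c : mu D != 0 ->
  \int[mu]_(t in D) fstar f (s t + c) <= \int[mu]_(t in D) fstar f (s t) + c%:E ->
  c = 0%R.
Proof.
move=> muD0 le_shift; apply/eqP; apply: contraNT muD0 => c0.
have fin_I : \int[mu]_(t in D) fstar f (s t) + c%:E \is a fin_num.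
  by rewrite fin_numD integrable_fin_num.
have [ic|nic] := pselect (mu.-integrable D (fun t => fstar f (s t + c))); last first.
  by move: le_shift fin_I; rewrite integral_fstar_shift_not_integrable // leye_eq => /eqP ->.
have gap_gt0 t : D t -> 0 < fstar f (s t + c) - G c t.
  move=> Dt; rewrite sube_gt0 /G -derive1_x //.
  by apply: fstar_derive1_shift_lt; rewrite ?x_gt0.
apply/eqP; apply: (gt0_integral_eq0 mD _ gap_gt0).
  by apply: (measurable_int mu); apply: integrableB.
rewrite integralB // integral_G.
suff -> : \int[mu]_(t in D) fstar f (s t + c) =
    \int[mu]_(t in D) fstar f (s t) + c%:E by rewrite subee.
by apply/eqP; rewrite eq_le le_shift integral_fstar_shift_ge.
Qed.

End fstar_integral.

Section normalization.
Variables (R : realType) (d : nat) (Q : probability (BorelRd R d) R).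
Variables (M : set (BorelRd R d)) (L : BorelRd R d -> R) (f : R -> R) (lam N : R).
Hypothesis mM : measurable M.
Hypothesis QM : Q M = 1%E.
Hypothesis mL : measurable_fun M L.
Hypothesis L_ge0 : forall t, 0 <= L t.
Hypothesis lam_gt0 : 0 < lam.
Hypothesis f_convex : convex_on f `[0, +oo[.
Hypothesis f_strict : strictly_convex_on f `[0, +oo[.
Hypothesis f_der : forall x, 0 < x -> derivable f x 1.
Hypothesis hN : assumption_b Q M L f lam N.

(* Assumption (b) only controls (f')^-1 on the support, which has full measure. *)
Let D := M `&` msupp Q.
Let s t := - ((N + L t) / lam).
Let x t := fdot_inv f (s t).

Let DM : D `<=` M. Proof. by move=> t []. Qed.

Let mD : measurable D.
Proof. exact: measurableI _ _ mM (measurable_msupp Q). Qed.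

Let integral_MD (g : BorelRd R d -> \bar R) : measurable_fun M g ->
  (\int[Q]_(t in M) g t = \int[Q]_(t in D) g t)%E.
Proof.
move=> mg; rewrite (integral_setD_null (measurableC (measurable_msupp Q)) mM mg).
  by rewrite setDE setCK.
exact: msuppC_null.
Qed.

Let measurable_shift b : measurable_fun M (fun t => - ((b + L t) / lam)).
Proof. by apply: measurable_funN; apply: measurable_funM => //; exact: measurable_funD. Qed.

Let ms : measurable_fun D s := measurable_funS mM DM (measurable_shift N).

Let mx : measurable_fun D x.
Proof.
apply: measurable_funS mM DM _.
exact: measurableT_comp (measurable_fdot_inv f_convex f_strict f_der) (measurable_shift N).
Qed.

Let x_gt0 t : D t -> 0 < x t.
Proof. by case=> Mt suppt; apply: hN.1. Qed.

Let derive1_x t : D t -> derive1 f (x t) = s t.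
Proof. by move=> Dt; apply: derive1_fdot_inv; exact: x_gt0. Qed.

Let integral_x : (\int[Q]_(t in D) (x t)%:E = 1)%E.
Proof.
rewrite -integral_MD; first exact: hN.2.
apply/measurable_EFinP; apply: measurableT_comp (measurable_shift N).
exact: measurable_fdot_inv f_convex f_strict f_der.
Qed.

Let QD_neq0 : Q D != 0%E.
Proof.
have mC := measurableC (measurable_msupp Q).
have -> : D = M `\` ~` msupp Q by rewrite setDE setCK.
(* [change] restores the coercion of Q under which [QM] is stated. *)
rewrite measureD //; last by change (Q M < +oo)%E; rewrite QM ltry.
rewrite (subset_measure0 (measurableI _ _ mM mC) mC (@subIsetr _ _ _) (msuppC_null Q)) sube0.
by change (Q M != 0%E); rewrite QM.
Qed.

Let integrable_fstar_s : Q.-integrable D (fun t => fstar f (s t)).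
Proof.
apply: (integrable_fstar f_convex f_der mD ms mx x_gt0 derive1_x integral_x
  (K := - N / lam)).
by move=> t _; rewrite /s mulNr lerN2 ler_pM2r ?invr_gt0 // lerDl.
Qed.

Let objectiveE b : objective Q M L f lam b =
  (lam%:E * \int[Q]_(t in D) fstar f (s t + (N - b) / lam) + b%:E)%E.
Proof.
rewrite /objective integral_MD; last first.
  exact: measurableT_comp (measurable_fstar f) (measurable_shift b).
congr (_ * _ + _)%E; apply: eq_integral => t _; congr fstar.
by rewrite /s; field; rewrite gt_eqF.
Qed.

Let I := fine (\int[Q]_(t in D) fstar f (s t)).

Let IE : (I%:E = \int[Q]_(t in D) fstar f (s t))%E.
Proof. by rewrite fineK // integrable_fin_num. Qed.

Let objectiveN : objective Q M L f lam N = (lam * I + N)%:E.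
Proof.
rewrite objectiveE subrr mul0r EFinD EFinM IE.
by under eq_integral do rewrite addr0.
Qed.

Let affine_shift b : (lam * I + N - b) / lam = I + (N - b) / lam.
Proof. by field; rewrite gt_eqF. Qed.

Lemma objective_min b : (objective Q M L f lam N <= objective Q M L f lam b)%E.
Proof.
rewrite objectiveN objectiveE EFin_le_affine // affine_shift EFinD IE.
exact: (integral_fstar_shift_ge (mu := Q) f_convex f_der mD ms mx x_gt0 derive1_x
  integral_x integrable_fstar_s).
Qed.

Lemma objective_argmin_unique b :
  (objective Q M L f lam b <= objective Q M L f lam N)%E -> b = N.
Proof.
rewrite objectiveN objectiveE affine_le_EFin // affine_shift EFinD IE.
move/(integral_fstar_shift_le_eq0 (mu := Q) f_convex f_der mD ms mx x_gt0 derive1_x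
  integral_x integrable_fstar_s QD_neq0).
by move/eqP; rewrite mulf_eq0 invr_eq0 (gt_eqF lam_gt0) orbF subr_eq0 => /eqP.
Qed.

End normalization.

Theorem theorem2 (R : realType) (d : nat) (M : set (BorelRd R d))
  (X Y : Type) (h : BorelRd R d -> X -> Y) (ell : Y -> Y -> R)
  (ell_ge0 : forall y y', 0 <= ell y y') (ell_refl : forall y, ell y y = 0)
  (z : seq (X * Y)) (z_nonempty : (0 < size z)%N)
  (Q : probability (BorelRd R d) R)
  (mM : measurable M) (QM : Q M = 1%E)
  (mL : measurable_fun M (Lz ell h z))
  (lam : R) (lam_gt0 : 0 < lam)
  (f : R -> R)
  (f_convex : convex_on f `[0, +oo[%classic)
  (f1 : f 1 = 0)
  (f0 : (f @ (0:R)^'+) --> (f 0 : R))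
  (f_strict : strictly_convex_on f `[0, +oo[%classic)
  (f_der : forall x, 0 < x -> derivable f x 1)
  (hb : exists beta, assumption_b Q M (Lz ell h z) f lam beta) :
  let N := normalization Q M (Lz ell h z) f lam in
  (forall beta, (objective Q M (Lz ell h z) f lam N
                 <= objective Q M (Lz ell h z) f lam beta)%E)
  /\ (forall beta, (objective Q M (Lz ell h z) f lam beta
                    <= objective Q M (Lz ell h z) f lam N)%E -> beta = N).
Proof.
move=> N; have L_ge0 t : 0 <= Lz ell h z t.
  by rewrite mulr_ge0 ?invr_ge0 // sumr_ge0.
have hN : assumption_b Q M (Lz ell h z) f lam N.
  by case: hb => b hb; exact: (xgetPex 0 (ex_intro _ b hb)).
by split=> b; [apply: objective_min | apply: objective_argmin_unique].
Qed.
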